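(* Let $G$ be a finite non-abelian group which is exponent-critical. Then the order of $G$ is divisible by at most three distinct primes.
   Context: A finite group $G$ is called exponent-critical if the exponent $\exp(G)$ of $G$ is not equal to the least common multiple of the exponents of the proper non-abelian subgroups of $G$ (the least common multiple of an empty collection being $1$). *)

From mathcomp Require Import all_boot all_fingroup all_solvable.
Set Implicit Arguments. Unset Strict Implicit. Unset Printing Implicit Defensive.
Local Open Scope group_scope.

Definition lcm_exp_nonabelian_proper (gT : finGroupType) (G : {group gT}) : nat :=
  \big[lcmn/1%N]_(H : {group gT} | (H \proper G) && ~~ abelian H) exponent H.

Definition exponent_critical (gT : finGroupType) (G : {group gT}) : Prop :=
  exponent G <> lcm_exp_nonabelian_proper G.

From mathcomp Require Import all_boot all_fingroup all_solvable ssralg finalg.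
Set Implicit Arguments. Unset Strict Implicit. Unset Printing Implicit Defensive.
Import GRing.Theory FinRing.Theory FiniteModule.
Local Open Scope group_scope.

(* Since L, the lcm of the exponents of the proper non-abelian subgroups,
   divides exp(G) but differs from it, some p-part of exp(G) does not divide
   L; an element x of that order lies in no proper non-abelian subgroup.
   Suppose #|G| has at least four prime divisors, so that every subgroup
   containing x whose order has at most three prime divisors is abelian.
   If x is not central, the Sylow p-subgroup P through x is abelian and
   N_G(P) centralizes P (otherwise P <| G and P<y> would be a non-abelian
   {p,q}-subgroup for a q-element y not commuting with x), so Burnside's
   transfer theorem gives a normal p-complement M; by coprime action x
   normalizes, hence centralizes, a Sylow s-subgroup of M for each prime
   s <> p, and x is central after all.  If x is central, take non-commuting
   q- and r-elements y, z and a fourth prime s: a Sylow s-subgroup S again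
   has N_G(S) centralizing S, and the normal s-complement contains x, y, z,
   so it is G, which is absurd. *)

Lemma has_primes_notin n (s : seq nat) :
  size s < size (primes n) -> exists2 r, r \in primes n & r \notin s.
Proof.
move=> lt_s_n; apply/hasP; apply: contraLR lt_s_n => /hasPn sub_n_s.
by rewrite -leqNgt uniq_leq_size ?primes_uniq // => r /sub_n_s /negbNE.
Qed.

Lemma size_primes_dvdM m n k : 0 < m -> 0 < n -> k %| m * n ->
  size (primes k) <= size (primes m) + size (primes n).
Proof.
move=> m_gt0 n_gt0 k_dv; rewrite -size_cat uniq_leq_size ?primes_uniq // => r.
move/(pi_of_dvd k_dv); rewrite muln_gt0 m_gt0 n_gt0 => /(_ isT).
by rewrite pi_ofM // inE mem_cat.
Qed.

Lemma exists_part_not_dvdn m n :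
  0 < n -> ~~ (n %| m) -> exists2 p, p \in primes n & ~~ (n`_p %| m).
Proof.
move=> n_gt0 ndvd; apply/hasP; apply: contraR ndvd => /hasPn no_p.
by apply/dvdn_partP => // p /no_p /negbNE.
Qed.

Section PrimesOfSubgroups.
Variable gT : finGroupType.
Implicit Types (A B : {group gT}) (p q : nat).

Lemma size_primes_pgroup p A : p.-group A -> size (primes #|A|) <= 1.
Proof.
move=> /pgroupP pA; apply: (@uniq_leq_size _ _ [:: p]) (primes_uniq _) _ => r.
by rewrite mem_primes => /and3P[pr_r _ /(pA r pr_r)]; rewrite !inE.
Qed.

Lemma size_primes_join A B : B \subset 'N(A) ->
  size (primes #|A <*> B|) <= size (primes #|A|) + size (primes #|B|).
Proof.
move=> nAB; rewrite norm_joinEr // size_primes_dvdM ?cardG_gt0 //.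
by rewrite mul_cardG dvdn_mulr.
Qed.

Lemma size_primes_join_pgroups p q A B :
  B \subset 'N(A) -> p.-group A -> q.-group B -> size (primes #|A <*> B|) <= 2.
Proof.
move=> nAB pA qB; apply: leq_trans (size_primes_join nAB) _.
exact: leq_add (size_primes_pgroup pA) (size_primes_pgroup qB).
Qed.

End PrimesOfSubgroups.

Section Elements.
Variable gT : finGroupType.
Implicit Types (G H M S : {group gT}) (y z : gT).

Lemma mem_constt pi G y : y \in G -> y.`_pi \in G.
Proof. by rewrite -cycle_subG => /subsetP; apply; apply: cycle_constt. Qed.

Lemma prime_constt_notin_cent1 y z :
  y \notin 'C[z] -> exists2 q, prime q & y.`_q \notin 'C[z].
Proof.
move=> ncyz.
have [q /andP[]|all_cent] :=
  pickP [pred q : 'I_#[y].+1 | prime q && (y.`_q \notin 'C[z])]; first by exists q.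
case/negP: ncyz; rewrite -(prod_constt y) big_mkord; apply: group_prod => q _.
have [pr_q | npr_q] := boolP (prime q).
  by move: (all_cent q); rewrite /= pr_q => /negbFE.
rewrite (constt1P _) ?group1 // /p_elt p'natEpi ?order_gt0 //.
by apply: contra npr_q; rewrite mem_primes => /andP[].
Qed.

Lemma nonabelian_of_notin_cent1 H y z :
  y \in H -> z \in H -> z \notin 'C[y] -> ~~ abelian H.
Proof. by move=> Hy Hz; apply: contra => /centsP cHH; apply/cent1P/cHH. Qed.

Lemma coprime_expg_eq1 G n y : y \in G -> coprime #|G| n -> y ^+ n = 1 -> y = 1.
Proof. by move=> Gy coGn yn1; rewrite -(expgK coGn Gy) yn1 expg1n. Qed.

Lemma normal_TI_Sylow_p'group s G S M :
  s.-Sylow(G) S -> M <| G -> M :&: S = 1 -> s^'.-group M.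
Proof.
move=> sylS /andP[sMG nMG] tiMS; have [T sylT] := Sylow_exists s M.
have [sTM sT _] := and3P sylT.
have [g Gg sTSg] := Sylow_subJ sylS (subset_trans sTM sMG) sT.
have T1 : T :=: 1.
  apply/trivgP; rewrite -(conjs1g g) -tiMS conjIg (normP (subsetP nMG g Gg)).
  by rewrite subsetI sTM.
by rewrite /pgroup -partn_eq1 ?cardG_gt0 // -(card_Hall sylT) T1 cards1.
Qed.

End Elements.

Section BurnsideNormalComplement.
Variables (gT : finGroupType) (s : nat) (G S : {group gT}).
Hypotheses (sylS : s.-Sylow(G) S) (nScS : 'N_G(S) \subset 'C(S)).

Let sSG : S \subset G := pHall_sub sylS.

Let abS : abelian S.
Proof. by apply: subset_trans nScS; rewrite subsetI sSG normG. Qed.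

(* S and S :^ x are Sylow in C_G[h ^ x], hence conjugate there, so the fusion
   is realized inside N_G(S), which centralizes S. *)
Lemma Burnside_fusion h x : x \in G -> h \in S -> h ^ x \in S -> h ^ x = h.
Proof.
move=> Gx Sh Shx.
have sylSx : s.-Sylow(G) (S :^ x) by rewrite pHallJ.
have sCG : 'C_G[h ^ x] \subset G := subsetIl _ _.
have cS : S \subset 'C_G[h ^ x] by rewrite subsetI sSG sub_cent1 (subsetP abS).
have cSx : S :^ x \subset 'C_G[h ^ x].
  have abSx : abelian (S :^ x) by rewrite abelianJ.
  by rewrite subsetI (pHall_sub sylSx) sub_cent1 (subsetP abSx) ?memJ_conjg.
have [c /setIP[Gc /cent1P cxc] defS] :=
  Sylow_trans (pHall_subl cSx sCG sylSx) (pHall_subl cS sCG sylS).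
have NGxc : x * c \in 'N_G(S).
  by rewrite inE groupM //; apply/normP; rewrite conjsgM -defS.
have hxc : h ^ (x * c) = h by rewrite /conjg -(centP (subsetP nScS _ NGxc) h Sh) mulKg.
by rewrite -{2}hxc conjgM; symmetry; apply/conjg_fixP/commgP/commute_sym.
Qed.

Let abfS : abelian (idm S @* S).
Proof. by rewrite morphim_idm. Qed.

Let tau := transfer G abfS.

(* Burnside_fusion trivializes every conjugation in the cycle expansion. *)
Lemma transfer_Sylow g : g \in S -> tau g = (fmod abfS g *+ #|G : S|)%R.
Proof.
move=> Sg; have Gg := subsetP sSG g Sg.
have trX := transversalP (rcosets_cycle_partition sSG Gg).
rewrite /tau (transfer_cycle_expansion sSG abfS Gg trX).
rewrite -(sum_index_rcosets_cycle sSG Gg trX) -sumrMnr.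
apply: eq_bigr => x Xx; have Gx := subsetP (transversal_sub trX) x Xx.
set n := #|_ : _|.
have Sgn : g ^+ n \in S by rewrite groupX.
have Sgnx : (g ^+ n) ^ x^-1 \in S.
  have := mulg_exp_card_rcosets S g x; rewrite -/n mem_rcoset.
  by rewrite conjgE invgK mulgA.
rewrite /= (Burnside_fusion (groupVr Gx) Sgn Sgnx) /restrm /= fmodX //.
by rewrite /= morphim_idm.
Qed.

Theorem Burnside_normal_complement : exists M : {group gT},
  [/\ M <| G, s^'.-group M & {in G, forall y, s^'.-elt y -> y \in M}].
Proof.
have [_ sS s'iGS] := and3P sylS.
have coS : coprime #|S| #|G : S| := pnat_coprime sS s'iGS.
exists ('ker (transfer_morphism G abfS))%G; split; first exact: ker_normal.
  apply: (normal_TI_Sylow_p'group sylS (ker_normal _)).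
  apply/trivgP/subsetP => g /setIP[Kg Sg]; rewrite inE.
  have := mker Kg; rewrite /= -/tau transfer_Sylow // zmod1gE => /(congr1 fmval).
  rewrite fmvalZ fmval0 fmodK; last by rewrite /= morphim_idm.
  by move/(coprime_expg_eq1 Sg coS)=> ->.
move=> y Gy s'y; apply/kerP => //=; rewrite -/tau zmod1gE.
have Su : fmval (tau y) \in S by have := fmodP (tau y); rewrite /= morphim_idm.
apply: (@fmod_inj _ _ abfS); rewrite fmval0.
apply: (coprime_expg_eq1 Su (pnat_coprime sS s'y)).
rewrite -fmvalZ -zmodXgE -(morphX (transfer_morphism G abfS)) //= expg_order.
by rewrite [transfer G abfS 1](morph1 (transfer_morphism G abfS)) fmval0.
Qed.

End BurnsideNormalComplement.

Definition critical_elt (gT : finGroupType) (G : {group gT}) (x : gT) :=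
  forall H : {group gT}, H \subset G -> x \in H -> ~~ abelian H -> H :=: G.

Section CriticalElement.
Variables (gT : finGroupType) (G : {group gT}) (p : nat) (x : gT).
Hypotheses (Gx : x \in G) (px : p.-elt x) (critx : critical_elt G x).
Hypothesis many_primes : 3 < size (primes #|G|).
Implicit Types (H M P S : {group gT}) (y z : gT).

Lemma critical_elt_abelian H :
  H \subset G -> x \in H -> size (primes #|H|) <= 3 -> abelian H.
Proof.
move=> sHG xH small_H; apply/negPn/negP => /(critx sHG xH) eqHG.
by move: many_primes; rewrite -eqHG ltnNge small_H.
Qed.

Lemma critical_elt_join_abelian H :
  H \subset G -> x \in 'N(H) -> size (primes #|H|) <= 2 -> abelian (H <*> <[x]>).
Proof.
move=> sHG nHx small_H; have nHX : <[x]> \subset 'N(H) by rewrite cycle_subG.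
apply: critical_elt_abelian; first by rewrite join_subG sHG cycle_subG.
  by rewrite mem_gen // inE cycle_id orbT.
apply: leq_trans (size_primes_join nHX) _.
by rewrite -addn1 leq_add // (size_primes_pgroup px).
Qed.

Lemma critical_elt_norm S :
  S \subset G -> x \in 'N(S) -> 'N_G(S) \subset 'C(S) \/ G \subset 'N(S).
Proof.
move=> sSG nSx; have [abN | /(critx (subsetIl _ _)) eqNG] := boolP (abelian 'N_G(S)).
  by left; apply: sub_abelian_cent abN _; rewrite subsetI sSG normG.
by right; rewrite -eqNG ?subsetIr // inE Gx.
Qed.

Lemma central_critical_elt_abelian H :
  x \in 'C(G) -> H \subset G -> size (primes #|H|) <= 2 -> abelian H.
Proof.
move=> xZ sHG small_H.
have nHx : x \in 'N(H) by rewrite (subsetP (cent_sub H)) // (subsetP (centS sHG)).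
exact: abelianS (joing_subl _ _) (critical_elt_join_abelian sHG nHx small_H).
Qed.

Lemma central_critical_elt_cent_pelt (s t : nat) S w : x \in 'C(G) ->
  S \subset G -> s.-group S -> G \subset 'N(S) -> w \in G -> t.-elt w -> w \in 'C(S).
Proof.
move=> xZ sSG sS nSG Gw tw.
have nSw : <[w]> \subset 'N(S) by rewrite cycle_subG (subsetP nSG).
have: abelian (S <*> <[w]>).
  apply: central_critical_elt_abelian xZ _ (size_primes_join_pgroups nSw sS tw).
  by rewrite join_subG sSG cycle_subG.
by rewrite abelianY cycle_subG => /and3P[].
Qed.

Lemma critical_elt_noncentral : ~~ abelian G -> ~~ (G \subset 'C[x]).
Proof.
move=> nabG; apply/negP; rewrite sub_cent1 => xZ.
have [y0 Gy0] := subsetPn nabG; rewrite -sub_cent1 => /subsetPn[z0 Gz0].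
case/prime_constt_notin_cent1=> q _; rewrite cent1C.
case/prime_constt_notin_cent1=> r _; set y := z0.`_q; set z := y0.`_r => nyz.
have [Gy Gz] : y \in G /\ z \in G by split; apply: mem_constt.
have [s pi_s] := has_primes_notin (s := [:: p; q; r]) many_primes.
rewrite !inE !negb_or => /and3P[s_p s_q s_r].
have [S sylS] := Sylow_exists s G; have [sSG sS _] := and3P sylS.
have nScS : 'N_G(S) \subset 'C(S).
  have xCS : x \in 'C(S) by rewrite (subsetP (centS sSG)).
  have [//|nSG] := critical_elt_norm sSG (subsetP (cent_sub S) x xCS).
  have cent_elt := central_critical_elt_cent_pelt xZ sSG sS nSG.
  have xCGS : x \in 'C_G(S) by rewrite inE Gx.
  have yCGS : y \in 'C_G(S) by rewrite inE Gy (cent_elt q) ?p_elt_constt.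
  have zCGS : z \in 'C_G(S) by rewrite inE Gz (cent_elt r) ?p_elt_constt.
  have eqCG := critx (subsetIl _ _) xCGS (nonabelian_of_notin_cent1 yCGS zCGS nyz).
  by rewrite (subset_trans (subsetIl _ _)) // -{1}eqCG subsetIr.
have [M [nsMG s'M sM]] := Burnside_normal_complement sylS nScS.
have M_elt (t : nat) w : w \in G -> t.-elt w -> t != s -> w \in M.
  by move=> Gw tw t_s; apply: sM Gw (pi_pnat tw _); rewrite !inE.
have xM : x \in M by rewrite (M_elt p) // eq_sym.
have yM : y \in M by rewrite (M_elt q) ?p_elt_constt // eq_sym.
have zM : z \in M by rewrite (M_elt r) ?p_elt_constt // eq_sym.
have eqMG := critx (normal_sub nsMG) xM (nonabelian_of_notin_cent1 yM zM nyz).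
move: pi_s s'M; rewrite mem_primes eqMG => /and3P[pr_s _ s_dvG] /pgroupP/(_ s pr_s s_dvG).
by rewrite !inE eqxx.
Qed.

Lemma critical_elt_part_dvd_cent1 M s :
    M <| G -> p^'.-group M -> {in G, forall y, p^'.-elt y -> y \in M} -> s != p ->
  (#|G|`_s)%N %| #|'C_G[x]|.
Proof.
move=> /andP[sMG nMG] p'M sM s_p.
have nMX : <[x]> \subset 'N(M) by rewrite cycle_subG (subsetP nMG).
have coMX : coprime #|M| #|<[x]>| by rewrite coprime_sym (pnat_coprime px p'M).
have [S sylS nSX] := sol_coprime_Sylow_exists s (abelian_sol (cycle_abelian x)) nMX coMX.
have [S0 sylS0] := Sylow_exists s G.
have sS0M : S0 \subset M.
  apply/subsetP => w S0w; apply: sM; first exact: subsetP (pHall_sub sylS0) w S0w.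
  by apply: pi_pnat (mem_p_elt (pHall_pgroup sylS0) S0w) _; rewrite !inE.
have cardS : #|S| = (#|G|`_s)%N.
  by rewrite (card_Hall sylS) -(card_Hall (pHall_subl sS0M sMG sylS0)) (card_Hall sylS0).
have sSG : S \subset G := subset_trans (pHall_sub sylS) sMG.
have nSx : x \in 'N(S) by rewrite -cycle_subG.
have small_S := leq_trans (size_primes_pgroup (pHall_pgroup sylS)) (isT : 1 <= 2).
have := critical_elt_join_abelian sSG nSx small_S.
rewrite abelianY cycle_subG => /and3P[_ _ cSx].
by rewrite -cardS cardSg // subsetI sSG sub_cent1.
Qed.

Lemma critical_elt_central : G \subset 'C[x].
Proof.
have [//|ncx] := boolP (G \subset 'C[x]); have [y0 Gy0] := subsetPn ncx.
case/prime_constt_notin_cent1=> q _; set y := y0.`_q => nyx.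
have Gy : y \in G := mem_constt q Gy0.
have sXG : <[x]> \subset G by rewrite cycle_subG.
have [P sylP] := Sylow_superset sXG px; rewrite cycle_subG => xP.
have [sPG pP _] := and3P sylP.
have abP : abelian P.
  by apply: critical_elt_abelian sPG xP (leq_trans (size_primes_pgroup pP) _).
have nPcP : 'N_G(P) \subset 'C(P).
  have [//|nPG] := critical_elt_norm sPG (subsetP (normG P) x xP).
  have nPY : <[y]> \subset 'N(P) by rewrite cycle_subG (subsetP nPG).
  have xPY : x \in P <*> <[y]> by rewrite mem_gen // inE xP.
  have yPY : y \in P <*> <[y]> by rewrite mem_gen // inE cycle_id orbT.
  have: abelian (P <*> <[y]>).
    apply: critical_elt_abelian xPY _; first by rewrite join_subG sPG cycle_subG.
    exact: leq_trans (size_primes_join_pgroups nPY pP (p_elt_constt q y0)) _.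
  by rewrite (negPf (nonabelian_of_notin_cent1 xPY yPY nyx)).
have [M [nsMG p'M sM]] := Burnside_normal_complement sylP nPcP.
have part_dvd s : s \in \pi(#|G|) -> (#|G|`_s)%N %| #|'C_G[x]|.
  move=> _; have [-> | s_p] := eqVneq s p.
    by rewrite -(card_Hall sylP) cardSg // subsetI sPG sub_cent1 (subsetP abP).
  exact: critical_elt_part_dvd_cent1 nsMG p'M sM s_p.
have eqCG : 'C_G[x] = G.
  by apply/eqP; rewrite eqEcard subsetIl dvdn_leq //; apply/dvdn_partP.
by case/negP: ncx; rewrite -{1}eqCG subsetIr.
Qed.

End CriticalElement.

Lemma exponent_critical_elt (gT : finGroupType) (G : {group gT}) :
  exponent_critical G -> exists (p : nat) x, [/\ x \in G, p.-elt x & critical_elt G x].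
Proof.
rewrite /exponent_critical; set L := lcm_exp_nonabelian_proper G => neGL.
have dvdLG : L %| exponent G.
  by apply/dvdn_biglcmP => H /andP[/proper_sub sHG _]; apply: exponentS.
have [p _ ndvd_p] : exists2 p, p \in primes (exponent G) & ~~ ((exponent G)`_p %| L).
  apply: exists_part_not_dvdn (exponent_gt0 G) _; apply/negP => dvdGL.
  by apply: neGL; apply/eqP; rewrite eqn_dvd dvdGL.
have [P sylP] := Sylow_exists p G; have [sPG pP _] := and3P sylP.
have [x Px eP] := exponent_witness (pgroup_nil pP).
exists p, x; split; [exact: subsetP sPG x Px | exact: mem_p_elt pP Px |].
move=> H sHG xH nabH; apply/eqP; apply: contraR ndvd_p => neHG.
rewrite -(exponent_Hall sylP) eP (dvdn_trans (dvdn_exponent xH)) //.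
by apply: (biglcmn_sup H); rewrite // properEneq neHG sHG.
Qed.

Theorem theoremA (gT : finGroupType) (G : {group gT}) :
  ~~ abelian G -> exponent_critical G -> (size (primes #|G|) <= 3)%N.
Proof.
move=> nabG /exponent_critical_elt[p [x [Gx px critx]]].
rewrite leqNgt; apply/negP => many_primes.
have := critical_elt_noncentral Gx px critx many_primes nabG.
by rewrite (critical_elt_central Gx px critx many_primes).
Qed.
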